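(* Let $n\ge 1$. For $f\in L^1_{\mathrm{loc}}(\mathbb{R}^n)$ put \[\|f\|_{BMO^w}=\|mf\|_{\infty}+\|Mf\|_{\infty}\quad\text{and}\quad \|f\|^*_{BMO^w}=\|mf\|_{\infty}+2\sup_{x\in\mathbb{R}^n}\ \sup_{Q\ni x}\ \inf_{\alpha>0}\left|\frac{1}{\lambda(Q)}\int_Q [f(\xi)-\alpha]\,d\lambda(\xi)\right| .\] Then for every $f\in BMO^w$, \[\|f\|_{BMO^w}\le \|f\|^*_{BMO^w}\le 2\|f\|_{BMO^w}.\]
   Context: $\lambda$ is Lebesgue measure on $\mathbb{R}^n$; ''cube'' means a hypercube $Q\subseteq\mathbb{R}^n$, and $\sup_{Q\ni x}$ is over all cubes containing $x$. For $f\in L^1_{\mathrm{loc}}(\mathbb{R}^n)$ and a cube $Q$, $f_Q=\left|\frac{1}{\lambda(Q)}\int_Q f\,d\lambda\right|$ (absolute value of the average). Define $Mf(x)=\sup_{Q\ni x}\left|\frac{1}{\lambda(Q)}\int_Q[f(\xi)-f_Q]\,d\lambda(\xi)\right|$ and $mf(x)=\sup_{Q\ni x} f_Q$. The space of functions of weak bounded mean oscillation is $BMO^w=\{f\in L^1_{\mathrm{loc}}(\mathbb{R}^n): Mf\in L^\infty(\mathbb{R}^n)\}$. *)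

(* R^n is modelled as n.-tuple R with the product
   (Borel) sigma-algebra from mathcomp-analysis; Lebesgue measure is a measure
   mu on it characterised by its values on closed boxes. *)
From HB Require Import structures.
From mathcomp Require Import all_boot all_order all_algebra.
From mathcomp Require Import all_classical all_reals all_analysis.
From mathcomp Require Import ess_sup_inf measurable_realfun.
Set Implicit Arguments.
Unset Strict Implicit.
Unset Printing Implicit Defensive.
Import Order.TTheory GRing.Theory Num.Theory.
Import numFieldNormedType.Exports.
Local Open Scope classical_set_scope.
Local Open Scope ring_scope.

Section BMOw.
Context {R : realType} {n : nat}.
Variable mu : {measure set (n.-tuple R) -> \bar R}.

Definition box (a b : n.-tuple R) : set (n.-tuple R) :=
  [set y | forall i : 'I_n, tnth a i <= tnth y i <= tnth b i].

Definition cube (a : n.-tuple R) (l : R) : set (n.-tuple R) :=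
  [set y | forall i : 'I_n, tnth a i <= tnth y i <= tnth a i + l].

Definition is_cube (Q : set (n.-tuple R)) : Prop :=
  exists a l, 0 < l /\ Q = cube a l.

Definition avg (Q : set (n.-tuple R)) (g : n.-tuple R -> R) : R :=
  fine (\int[mu]_(y in Q) (g y)%:E) / fine (mu Q).

Definition fQ (f : n.-tuple R -> R) (Q : set (n.-tuple R)) : R := `|avg Q f|.

Definition Mf (f : n.-tuple R -> R) (x : n.-tuple R) : \bar R :=
  ereal_sup [set (`|avg Q (fun xi => f xi - fQ f Q)|)%:E
            | Q in [set Q | is_cube Q /\ Q x]].

Definition mf (f : n.-tuple R -> R) (x : n.-tuple R) : \bar R :=
  ereal_sup [set (fQ f Q)%:E | Q in [set Q | is_cube Q /\ Q x]].

Definition locally_integrable (f : n.-tuple R -> R) : Prop :=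
  forall Q, is_cube Q -> mu.-integrable Q (EFin \o f).

Definition Linf_norm (g : n.-tuple R -> \bar R) : \bar R :=
  ess_sup mu (fun x => `|g x|%E).

Definition in_Linf (g : n.-tuple R -> \bar R) : Prop :=
  measurable_fun [set: n.-tuple R] g /\ (Linf_norm g < +oo)%E.

Definition BMOw (f : n.-tuple R -> R) : Prop :=
  locally_integrable f /\ in_Linf (Mf f).

Definition BMOw_norm (f : n.-tuple R -> R) : \bar R :=
  (Linf_norm (mf f) + Linf_norm (Mf f))%E.

Definition sup_inf_term (f : n.-tuple R -> R) : \bar R :=
  ereal_sup (range (fun x : n.-tuple R =>
    ereal_sup [set ereal_inf [set (`|avg Q (fun xi => f xi - alpha)|)%:E
                             | alpha in [set alpha : R | 0 < alpha]]
              | Q in [set Q | is_cube Q /\ Q x]])).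

Definition BMOw_norm_star (f : n.-tuple R -> R) : \bar R :=
  (Linf_norm (mf f) + 2%:E * sup_inf_term f)%E.

End BMOw.

(* For a cube Q with average A, the definition f_Q = |A| makes the oscillation
   term |avg_Q (f - f_Q)| equal to |A| - A, which is exactly twice the distance
   inf_{α>0} |A - α| from A to the positive half-line.  Hence the supremum term
   in the starred norm is sup Mf.  Since cubes have positive measure and Mf
   dominates the oscillation of Q at every point of Q, the essential supremum of
   Mf is its pointwise supremum, so both norms coincide; the right inequality
   then only needs the norms to be nonnegative. *)
From Pilot Require Import Defs.
From HB Require Import structures.
From mathcomp Require Import all_boot all_order all_algebra.
From mathcomp Require Import all_classical all_reals all_analysis.
From mathcomp Require Import ess_sup_inf measurable_realfun.
From mathcomp.algebra_tactics Require Import ring lra.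
Import Order.TTheory GRing.Theory Num.Theory.
Import numFieldNormedType.Exports.
Local Open Scope classical_set_scope.
Local Open Scope ring_scope.

Section distance_to_positive_reals.
Context {R : realType}.

Lemma norm_subr_norm (A : R) : `|A - `|A| | = `|A| - A.
Proof.
have [A_ge0|A_lt0] := lerP 0 A; first by rewrite (ger0_norm A_ge0) subrr normr0.
by rewrite (ltr0_norm A_lt0) ltr0_norm; lra.
Qed.

Lemma ereal_inf_dist_pos (A : R) :
  ereal_inf [set (`|A - alpha|)%:E | alpha in [set alpha : R | 0 < alpha]] =
  ((`|A| - A) / 2)%:E.
Proof.
set S := [set _ | alpha in _].
apply/eqP; rewrite eq_le; apply/andP; split; last first.
  apply/ereal_infP => _ [alpha /= alpha_gt0 <-]; rewrite lee_fin.
  have [A_ge0|A_lt0] := lerP 0 A; first by rewrite ger0_norm // subrr mul0r.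
  by rewrite (ltr0_norm A_lt0) ltr0_norm; lra.
have [A_gt0|A_le0] := ltrP 0 A.
  have /ereal_inf_lbound : S (`|A - A|)%:E by exists A.
  by rewrite subrr normr0 gtr0_norm // subrr mul0r.
apply/lee_addgt0Pr => e e_gt0.
have /ereal_inf_lbound/le_trans -> // : S (`|A - e|)%:E by exists e.
by rewrite -EFinD lee_fin (ler0_norm A_le0) ler0_norm; lra.
Qed.

End distance_to_positive_reals.

Section cubes.
Context {R : realType} {n : nat} (mu : {measure set (n.-tuple R) -> \bar R}).
Hypothesis mu_box : forall a b : n.-tuple R, (forall i, tnth a i <= tnth b i) ->
  mu (box a b) = (\prod_(i < n) (tnth b i - tnth a i))%:E.

Lemma cube_box (a : n.-tuple R) l : cube a l = box a [tuple tnth a i + l | i < n].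
Proof. by apply/seteqP; split => y /= y_in i; have := y_in i; rewrite tnth_mktuple. Qed.

Lemma measurable_box (a b : n.-tuple R) : measurable (box a b).
Proof.
have -> : box a b =
    \bigcap_(i in [set: 'I_n]) ((@tnth n R)^~ i @^-1` `[tnth a i, tnth b i]).
  apply/seteqP; split => y /= y_in i; first by move=> _; rewrite /= in_itv; exact: y_in.
  by have := y_in i I; rewrite /= in_itv.
apply: fin_bigcap_measurable; first exact: finite_finset.
move=> i _; rewrite -[X in measurable X]setTI.
by apply: measurable_tnth => //; exact: measurable_itv.
Qed.

Lemma measurable_cube {Q : set (n.-tuple R)} : is_cube Q -> measurable Q.
Proof. by move=> [a [l [_ ->]]]; rewrite cube_box; exact: measurable_box. Qed.

Lemma measure_cube (a : n.-tuple R) l : 0 < l -> mu (cube a l) = (l ^+ n)%:E.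
Proof.
move=> l_gt0; rewrite cube_box mu_box; last first.
  by move=> i; rewrite tnth_mktuple lerDl ltW.
under eq_bigr => i _ do rewrite tnth_mktuple (addrC (tnth a i)) addrK.
by rewrite prodr_const card_ord.
Qed.

Lemma is_cube_measure {Q : set (n.-tuple R)} :
  is_cube Q -> exists2 m, 0 < m & mu Q = m%:E.
Proof.
by move=> [a [l [l_gt0 ->]]]; exists (l ^+ n); rewrite ?measure_cube ?exprn_gt0.
Qed.

Lemma exists_cube_mem (x : n.-tuple R) : exists Q, is_cube Q /\ Q x.
Proof.
exists (cube x 1); split; first by exists x, 1.
by move=> i; rewrite lexx lerDl ler01.
Qed.

Lemma measure_setT_gt0 : (0 < mu [set: n.-tuple R])%E.
Proof.
have [Q [Q_cube _]] := exists_cube_mem [tuple 0 | i < n].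
have [m m_gt0 muQ] := is_cube_measure Q_cube.
apply: (@lt_le_trans _ _ (mu Q)); first by rewrite muQ lte_fin.
by apply: le_measure; rewrite ?inE //; exact: measurable_cube.
Qed.

Lemma Linf_norm_ge0 (g : n.-tuple R -> \bar R) : (0 <= Linf_norm mu g)%E.
Proof. by apply: (ess_sup_gee measure_setT_gt0); apply: nearW => x; exact: abse_ge0. Qed.

Definition sup_cubes (h : set (n.-tuple R) -> \bar R) (x : n.-tuple R) : \bar R :=
  ereal_sup [set h Q | Q in [set Q | is_cube Q /\ Q x]].

Variable h : set (n.-tuple R) -> \bar R.
Hypothesis h_ge0 : forall Q, is_cube Q -> (0 <= h Q)%E.

Lemma sup_cubes_ge0 x : (0 <= sup_cubes h x)%E.
Proof.
have [Q [Q_cube Qx]] := exists_cube_mem x.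
apply: le_trans (h_ge0 _ Q_cube) _.
by apply: ereal_sup_ubound; exists Q.
Qed.

(* A null set cannot contain a cube, and sup_cubes h exceeds h Q on all of Q. *)
Lemma Linf_norm_sup_cubes :
  Linf_norm mu (sup_cubes h) = ereal_sup (range (sup_cubes h)).
Proof.
apply/eqP; rewrite eq_le; apply/andP; split.
  apply/ess_supP; apply: nearW => x /=; rewrite gee0_abs ?sup_cubes_ge0 //.
  by apply: ereal_sup_ubound; exists x.
apply: ge_ereal_sup => _ [x _ <-]; apply: ge_ereal_sup => _ [Q [Q_cube Qx] <-].
rewrite leNgt; apply/negP => hQ_gt.
have [N [mN muN0 N_above]] := ess_sup_ge mu (fun y => `|sup_cubes h y|%E).
have QN : Q `<=` N.
  move=> y Qy; apply: N_above => /=.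
  rewrite gee0_abs ?sup_cubes_ge0 // => sup_le; move: hQ_gt; rewrite ltNge.
  by apply/negP/negPn; apply: le_trans sup_le; apply: ereal_sup_ubound; exists Q.
have [m m_gt0 muQ] := is_cube_measure Q_cube.
have : (mu Q <= mu N)%E by apply: le_measure; rewrite ?inE //; exact: measurable_cube.
by rewrite muQ muN0 lee_fin leNgt m_gt0.
Qed.

End cubes.

Section BMOw_norms.
Context {R : realType} {n : nat} (mu : {measure set (n.-tuple R) -> \bar R}).
Hypothesis mu_box : forall a b : n.-tuple R, (forall i, tnth a i <= tnth b i) ->
  mu (box a b) = (\prod_(i < n) (tnth b i - tnth a i))%:E.
Variable f : n.-tuple R -> R.
Hypothesis f_loc : Defs.locally_integrable mu f.

Lemma avg_subr (Q : set (n.-tuple R)) (c : R) : is_cube Q ->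
  avg mu Q (fun xi => f xi - c) = avg mu Q f - c.
Proof.
move=> Q_cube; have mQ := measurable_cube Q_cube.
have [m m_gt0 muQ] := is_cube_measure mu mu_box Q_cube.
have c_int : mu.-integrable Q (EFin \o cst c).
  apply/integrableP; split; first exact/measurable_EFinP/measurable_cst.
  by rewrite (integral_cst mu mQ `|c%:E|) muQ -EFinM ltry.
have int_c : (\int[mu]_(_ in Q) c%:E = (c * m)%:E)%E.
  by rewrite EFinM -muQ; exact: integral_cst.
rewrite /avg muQ /=; under eq_integral do rewrite EFinB.
rewrite (integralB_EFin mQ (f_loc _ Q_cube) c_int) int_c.
rewrite -(fineK (integrable_fin_num mQ (f_loc _ Q_cube))) -EFinB /=.
by field; exact: lt0r_neq0.
Qed.

Lemma oscillation_inf_pos (Q : set (n.-tuple R)) : is_cube Q ->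
  (2%:E * ereal_inf [set (`|avg mu Q (fun xi => f xi - alpha)|)%:E
                    | alpha in [set alpha : R | (0 < alpha)%R]] =
   (`|avg mu Q (fun xi => f xi - fQ mu f Q)|)%:E)%E.
Proof.
move=> Q_cube; rewrite avg_subr // norm_subr_norm.
under eq_imagel => alpha _ do rewrite avg_subr //.
by rewrite ereal_inf_dist_pos -EFinM; congr EFin; field.
Qed.

Lemma sup_inf_term_Mf : (2%:E * sup_inf_term mu f = ereal_sup (range (Mf mu f)))%E.
Proof.
rewrite -ereal_sup_pZl // image_comp; congr ereal_sup.
apply: eq_imagel => x _ /=; rewrite -ereal_sup_pZl // image_comp.
by congr ereal_sup; apply: eq_imagel => Q [Q_cube _]; exact: oscillation_inf_pos.
Qed.

Lemma Linf_norm_Mf : Linf_norm mu (Mf mu f) = ereal_sup (range (Mf mu f)).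
Proof. by apply: Linf_norm_sup_cubes => // Q _; rewrite lee_fin. Qed.

Lemma BMOw_norm_starE : BMOw_norm_star mu f = BMOw_norm mu f.
Proof. by rewrite /BMOw_norm_star sup_inf_term_Mf /BMOw_norm Linf_norm_Mf. Qed.

End BMOw_norms.

Theorem proposition2 (R : realType) (n : nat)
  (mu : {measure set (n.-tuple R) -> \bar R})
  (hmu : forall a b : n.-tuple R, (forall i, tnth a i <= tnth b i) ->
     mu (box a b) = (\prod_(i < n) (tnth b i - tnth a i))%:E)
  (hn : (0 < n)%N) (f : n.-tuple R -> R) (hf : BMOw mu f) :
  (BMOw_norm mu f <= BMOw_norm_star mu f <= 2%:E * BMOw_norm mu f)%E.
Proof.
(* The two norms are in fact equal. *)
have [f_loc _] := hf.
rewrite BMOw_norm_starE // lexx /=.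
apply: lee_pemull; last by rewrite lee_fin ler1n.
by apply: adde_ge0; exact: Linf_norm_ge0 hmu _.
Qed.
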